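(* Let $S$ be a semidomain. If $S[x]$ is a length-factorial semidomain, then $S$ is an integral domain.
   Context: A semidomain is a subset $S$ of an integral domain $R$ containing $0$ and $1$ and closed under addition and multiplication; $S[x]$ is the semidomain of polynomials in $R[x]$ with coefficients in $S$. For a semidomain $T$, $T^*=T\setminus\{0\}$ is a multiplicative monoid; an atom is a nonunit $a\in T^*$ such that $a=bc$ with $b,c\in T^*$ forces $b$ or $c$ to be a unit; $T$ is atomic if every nonunit of $T^*$ is a finite product of atoms. A factorization of $b$ is a formal product of atoms (considered up to order and up to replacing atoms by associates) equal to $b$ up to a unit; its length is the number of atoms counted with multiplicity. $T$ is a length-factorial semidomain (LFS) if $T$ is atomic and any two distinct factorizations of the same element have distinct lengths. *)

From HB Require Import structures.
From mathcomp Require Import all_boot all_order all_algebra.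
Set Implicit Arguments. Unset Strict Implicit. Unset Printing Implicit Defensive.
Import GRing.Theory.
Local Open Scope ring_scope.

Definition semidomain (R : idomainType) (S : {pred R}) : Prop :=
  [/\ 0 \in S, 1 \in S,
      (forall a b, a \in S -> b \in S -> a + b \in S) &
      (forall a b, a \in S -> b \in S -> a * b \in S)].

Definition polysemi (R : idomainType) (S : {pred R}) : {pred {poly R}} :=
  fun p => p \is a polyOver S.

Section Factorization.
Variables (D : idomainType) (T : {pred D}).

Definition unitIn (u : D) : Prop :=
  u \in T /\ u != 0 /\ exists v, [/\ v \in T, v != 0 & u * v = 1].

Definition atomIn (a : D) : Prop :=
  [/\ a \in T, a != 0, ~ unitIn a &
      forall b c, b \in T -> b != 0 -> c \in T -> c != 0 -> a = b * c ->
        unitIn b \/ unitIn c].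

Definition assocIn (a b : D) : Prop := exists u, unitIn u /\ a = u * b.

Definition atomicIn : Prop :=
  forall x, x \in T -> x != 0 -> ~ unitIn x ->
    exists s : seq D, (forall a, a \in s -> atomIn a) /\ x = \prod_(a <- s) a.

Definition factorizationOf (x : D) (s : seq D) : Prop :=
  (forall a, a \in s -> atomIn a) /\ assocIn x (\prod_(a <- s) a).

Definition same_factorization (s t : seq D) : Prop :=
  exists t', perm_eq t t' /\ size s = size t' /\
    forall i, (i < size s)%N -> assocIn (nth 0 s i) (nth 0 t' i).

Definition LFS : Prop :=
  atomicIn /\
  forall x s t, x \in T -> x != 0 ->
    factorizationOf x s -> factorizationOf x t ->
    ~ same_factorization s t -> size s <> size t.

End Factorization.

From HB Require Import structures.
From mathcomp Require Import all_boot all_order all_algebra ring zify.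
From Stdlib Require Import Classical.
Import GRing.Theory.
Local Open Scope ring_scope.
Set Implicit Arguments. Unset Strict Implicit. Unset Printing Implicit Defensive.

(* It suffices to show that -1 lies in S. If it does not, S has characteristic
   zero and contains no negative integer. Let l = X + 2, A = X^4 + 4X^2 + 16,
   B = X^2 + 2X + 4 and C = X^3 + 8, so that l A = B C, and write p* for the
   reciprocal polynomial; p |-> p* is multiplicative and maps atoms with nonzero
   constant term to atoms. Then W = l A B* C* = B C l* A*, and taking
   factorizations fA, fB, fC of A, B, C gives two factorizations
   [l] fA fB* fC* and fB fC [l*] fA* of W of the same length. The atom l of the
   first one would be associated to an atom of the second, which would then be
   divisible by l in S[x]; but B, l* and A* do not vanish at -2, and
   C = l (X^2 - 2X + 4) where the cofactor has the coefficient -2, not in S.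
   So S[x] is not length-factorial. *)

Section Reciprocal.
Variable R : idomainType.
Implicit Types p q : {poly R}.

Definition revp (K : nat) p : {poly R} := \poly_(i < K.+1) p`_(K - i).

Lemma coef_revp K p i : (revp K p)`_i = if (i <= K)%N then p`_(K - i) else 0.
Proof. by rewrite coef_poly ltnS. Qed.

Lemma revp_sum K I (r : seq I) (P : pred I) (F : I -> {poly R}) :
  revp K (\sum_(i <- r | P i) F i) = \sum_(i <- r | P i) revp K (F i).
Proof.
apply: (big_morph (revp K)) => [p q|]; apply/polyP => i;
  by rewrite ?coefD !coef_revp ?coefD ?coef0; case: ifP; rewrite ?addr0.
Qed.

Lemma revpZXn K k c : (k <= K)%N -> revp K (c *: 'X^k) = c *: 'X^(K - k).
Proof.
move=> leKk; apply/polyP => i; rewrite coef_revp !coefZ !coefXn.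
have [leiK|ltKi] := leqP i K; last by rewrite (_ : (i == K - k)%N = false) ?mulr0 //; apply/eqP; lia.
by congr (_ * (_ : bool)%:R); apply/eqP/eqP; lia.
Qed.

Lemma poly_expand K p : (size p <= K.+1)%N -> p = \sum_(i < K.+1) p`_i *: 'X^i.
Proof. by move=> szp; rewrite -poly_def -/(take_poly _ _) take_poly_id. Qed.

Lemma revpE K p : (size p <= K.+1)%N -> revp K p = \sum_(i < K.+1) p`_i *: 'X^(K - i).
Proof.
move=> szp; rewrite {1}(poly_expand szp) revp_sum; apply: eq_bigr => i _.
by rewrite revpZXn // -ltnS.
Qed.

Lemma revpM N M p q : (size p <= N.+1)%N -> (size q <= M.+1)%N ->
  revp (N + M) (p * q) = revp N p * revp M q.
Proof.
move=> szp szq; rewrite (revpE szp) (revpE szq) {1}(poly_expand szp) {1}(poly_expand szq).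
rewrite !mulr_suml revp_sum; apply: eq_bigr => i _.
rewrite !mulr_sumr revp_sum; apply: eq_bigr => j _.
have ltiN := ltn_ord i; have ltjM := ltn_ord j.
rewrite -!scalerAl -!scalerAr !scalerA -!exprD revpZXn; last by lia.
by congr (_ *: 'X^_); lia.
Qed.

(* The reciprocal polynomial X^(deg p) p(1/X). *)
Definition recip p := revp (size p).-1 p.

Lemma coef_recip p i : (recip p)`_i = if (i < size p)%N then p`_((size p).-1 - i) else 0.
Proof.
rewrite coef_revp; have [->|p0] := eqVneq p 0; first by rewrite !coef0 !if_same.
by rewrite -ltnS prednK // size_poly_gt0.
Qed.

Lemma recip0 : recip 0 = 0.
Proof. by apply/polyP => i; rewrite coef_recip size_poly0 ltn0 coef0. Qed.

Lemma recipC c : recip c%:P = c%:P.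
Proof.
have [->|c0] := eqVneq c 0; first by rewrite recip0.
by apply/polyP => i; rewrite coef_recip size_polyC c0 !coefC; case: i.
Qed.

Lemma recipM p q : recip (p * q) = recip p * recip q.
Proof.
have [->|p0] := eqVneq p 0; first by rewrite mul0r recip0 mul0r.
have [->|q0] := eqVneq q 0; first by rewrite mulr0 recip0 mulr0.
have := size_poly_gt0 p; have := size_poly_gt0 q; rewrite p0 q0 => szq szp.
rewrite /recip size_mul // (_ : (_ + _).-2 = (size p).-1 + (size q).-1)%N; last by lia.
by apply: revpM; lia.
Qed.

Lemma recip_prod (s : seq {poly R}) : recip (\prod_(p <- s) p) = \prod_(p <- map recip s) p.
Proof. by rewrite big_map; apply: (big_morph recip recipM); rewrite -polyC1 recipC. Qed.

Lemma coef0_recip p : (recip p)`_0 = lead_coef p.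
Proof. by rewrite coef_revp subn0. Qed.

Lemma recip_eq0 p : (recip p == 0) = (p == 0).
Proof.
apply/eqP/eqP => [rp0|->]; last exact: recip0.
by apply/eqP; rewrite -lead_coef_eq0 -coef0_recip rp0 coef0.
Qed.

Lemma size_recip p : p`_0 != 0 -> size (recip p) = size p.
Proof.
move=> p00; have p0 : p != 0 by apply: contraNneq p00 => ->; rewrite coef0.
by rewrite size_poly_eq ?prednK ?size_poly_gt0 // subnn.
Qed.

Lemma recipK p : p`_0 != 0 -> recip (recip p) = p.
Proof.
move=> p00; have szp : (size p <= (size p).-1.+1)%N by rewrite leqSpred.
rewrite {1}/recip size_recip // /recip (revpE szp) revp_sum [RHS](poly_expand szp).
by apply: eq_bigr => i _; rewrite revpZXn ?leq_subr // subKn // -ltnS.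
Qed.

Lemma size_unitIn (T : {pred {poly R}}) u : unitIn T u -> size u = 1%N.
Proof.
move=> [_ [u0 [v [_ v0 uv]]]]; have := size_mul u0 v0.
rewrite uv size_poly1; have := size_poly_gt0 u; have := size_poly_gt0 v.
by rewrite u0 v0; lia.
Qed.

Lemma recip_unitIn (T : {pred {poly R}}) u : unitIn T u -> recip u = u.
Proof. by move/size_unitIn/eq_leq/size1_polyC->; rewrite recipC. Qed.

End Reciprocal.

Arguments recip {R}.

Section FactorizationTheory.
Variables (D : idomainType) (T : {pred D}).
Hypothesis mulT : mulr_closed T.
#[local] HB.instance Definition _ := GRing.isMulClosed.Build D T mulT.

Definition dvdIn (a b : D) : Prop := exists2 r, r \in T & b = a * r.

Lemma unitIn1 : unitIn T 1.
Proof. by split; rewrite ?rpred1 ?oner_neq0 //; split=> //; exists 1; rewrite ?rpred1 ?oner_neq0 ?mulr1. Qed.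

Lemma unitInM u v : unitIn T u -> unitIn T v -> unitIn T (u * v).
Proof.
move=> [Tu [u0 [u' [Tu' u'0 uu']]]] [Tv [v0 [v' [Tv' v'0 vv']]]].
split; first exact: rpredM; split; first by rewrite mulf_neq0.
by exists (u' * v'); rewrite ?rpredM ?mulf_neq0 // mulrACA uu' vv' mulr1.
Qed.

Lemma dvdIn_trans a b c : dvdIn a b -> dvdIn b c -> dvdIn a c.
Proof. by move=> [r Tr ->] [r' Tr' ->]; exists (r * r'); rewrite ?rpredM ?mulrA. Qed.

Lemma assocIn_dvdIn a b : assocIn T a b -> dvdIn a b.
Proof.
move=> [u [[_ [_ [v [Tv _ uv]]]] ->]]; exists v => //.
by rewrite mulrAC uv mul1r.
Qed.

Lemma factorization_dvdIn x f a : factorizationOf T x f -> a \in f -> dvdIn a x.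
Proof.
move=> [atf [u [[Tu _] ->]]] af; exists (u * \prod_(b <- rem a f) b).
  rewrite rpredM // big_seq rpred_prod // => b /mem_rem bf.
  by case: (atf b bf).
by rewrite (big_rem a af) /= mulrCA.
Qed.

Lemma factorization_cat x y f g : factorizationOf T x f -> factorizationOf T y g ->
  factorizationOf T (x * y) (f ++ g).
Proof.
move=> [atf [u [Uu ->]]] [atg [v [Uv ->]]]; split.
  by move=> a; rewrite mem_cat => /orP[/atf|/atg].
by exists (u * v); split; [exact: unitInM | rewrite big_cat /= mulrACA].
Qed.

Lemma factorization_atom a : atomIn T a -> factorizationOf T a [:: a].
Proof.
move=> ata; split; first by move=> b; rewrite inE => /eqP->.
by exists 1; split; [exact: unitIn1 | rewrite big_seq1 mul1r].
Qed.

Lemma atomic_factorization x : atomicIn T -> x \in T -> x != 0 ->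
  exists f, factorizationOf T x f.
Proof.
move=> atomicT Tx x0; have [Ux|nUx] := classic (unitIn T x).
  by exists [::]; split=> //; exists x; rewrite big_nil mulr1.
have [f [atf ->]] := atomicT x Tx x0 nUx.
by exists f; split=> //; exists 1; split; [exact: unitIn1 | rewrite mul1r].
Qed.

Lemma factorization_notdvdIn a x f : factorizationOf T x f -> ~ dvdIn a x ->
  forall b, b \in f -> ~ dvdIn a b.
Proof. by move=> fx ndvd b bf /dvdIn_trans/(_ (factorization_dvdIn fx bf)). Qed.

Lemma same_factorization_notdvdIn s t a : a \in s ->
  (forall b, b \in t -> ~ dvdIn a b) -> ~ same_factorization T s t.
Proof.
move=> a_s ndvd [t' [tt' [szs assoc]]].
have ltis : (index a s < size s)%N by rewrite index_mem.
apply: (ndvd (nth 0 t' (index a s))); first by rewrite (perm_mem tt') mem_nth // -szs.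
by apply: assocIn_dvdIn; rewrite -{1}(nth_index 0 a_s); apply: assoc.
Qed.

End FactorizationTheory.

Lemma dvdIn_root (R : idomainType) (T : {pred {poly R}}) l y x :
  dvdIn T l y -> root l x -> root y x.
Proof. by move=> [r _ ->] /eqP lx0; rewrite rootE hornerM lx0 mul0r. Qed.

Section PolySemidomain.
Variables (R : idomainType) (S : {pred R}).
Hypothesis semiS : semidomain S.

Lemma semidomain_semiring_closed : semiring_closed S.
Proof. by case: semiS => S0 S1 SD SM; split; split. Qed.

#[local] HB.instance Definition _ := GRing.isSemiringClosed.Build R S semidomain_semiring_closed.

Local Notation T := (polysemi S).

Lemma in_polysemi p : (p \in T) = (p \is a polyOver S).
Proof. by []. Qed.

Lemma polysemi_mulr_closed : mulr_closed T.
Proof.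
split=> [|p q]; rewrite !in_polysemi; first exact: rpred1.
by move=> Sp Sq; rewrite rpredM.
Qed.

Lemma recip_polysemi p : p \in T -> recip p \in T.
Proof.
rewrite !in_polysemi => /polyOverP Sp; apply/polyOverP => i.
by rewrite coef_recip; case: ifP; rewrite ?rpred0.
Qed.

Lemma recip_atomIn a : atomIn T a -> a`_0 != 0 -> atomIn T (recip a).
Proof.
move=> [Ta a0 nUa irra] a00; have recipKa := recipK a00.
split; [exact: recip_polysemi | by rewrite recip_eq0 | |].
  by move=> Ura; apply: nUa; rewrite -recipKa (recip_unitIn Ura).
move=> b c Tb b0 Tc c0 eq_ra.
have : b`_0 * c`_0 != 0 by rewrite -coef0M -eq_ra coef0_recip lead_coef_eq0.
rewrite mulf_eq0 negb_or => /andP[b00 c00].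
have : a = recip b * recip c by rewrite -recipM -eq_ra recipKa.
move/(irra _ _ (recip_polysemi Tb)); rewrite !recip_eq0 => /(_ b0 (recip_polysemi Tc) c0).
case=> [Urb|Urc]; [left; rewrite -(recipK b00) | right; rewrite -(recipK c00)].
  by rewrite (recip_unitIn Urb).
by rewrite (recip_unitIn Urc).
Qed.

Lemma recip_factorization x f : factorizationOf T x f -> x`_0 != 0 ->
  factorizationOf T (recip x) (map recip f).
Proof.
move=> [atf [u [Uu ex]]] x00; split; last first.
  by exists u; rewrite ex recipM recip_prod (recip_unitIn Uu).
move=> _ /mapP[a af ->]; apply: recip_atomIn; first exact: atf.
move: x00; rewrite ex (big_rem a af) /= !coef0M.
by apply: contraNneq => ->; rewrite mul0r mulr0.
Qed.

Lemma unitIn_const_factor b c : b \in T -> c \in T -> size c = 1%N ->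
  lead_coef (b * c) = 1 -> unitIn T c.
Proof.
move=> Tb Tc /eq_leq/size1_polyC ec.
rewrite lead_coefM [in lead_coef c]ec lead_coefC => lbc.
have /andP[lb0 c00] : (lead_coef b != 0) && (c`_0 != 0).
  by rewrite -negb_or -mulf_eq0 lbc oner_neq0.
split=> //; split; first by rewrite ec polyC_eq0.
exists (lead_coef b)%:P; split; last by rewrite ec -polyCM mulrC lbc.
  by rewrite in_polysemi polyOverC; apply/polyOverP.
by rewrite polyC_eq0.
Qed.

Lemma monic_atomIn p : p \in T -> p \is monic -> size p = 2%N -> atomIn T p.
Proof.
move=> Tp /monicP lp1 szp; split=> //; first by rewrite -size_poly_gt0 szp.
  by move/size_unitIn; rewrite szp.
move=> b c Tb b0 Tc c0 epbc; have := size_mul b0 c0; rewrite -epbc szp.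
have := size_poly_gt0 b; have := size_poly_gt0 c; rewrite b0 c0 => szc szb szbc.
have [szc1|szb1] : size c = 1%N \/ size b = 1%N by lia.
  by right; apply: (unitIn_const_factor Tb); rewrite // -epbc.
by left; apply: (unitIn_const_factor Tc); rewrite // mulrC -epbc.
Qed.

End PolySemidomain.

Section NegOneNotIn.
Variables (R : idomainType) (S : {pred R}).
Hypotheses (semiS : semidomain S) (Sneg1 : -1 \notin S).

#[local] HB.instance Definition _ :=
  GRing.isSemiringClosed.Build R S (semidomain_semiring_closed semiS).

Local Notation T := (polysemi S).

Lemma natrS_neq0 n : n.+1%:R != 0 :> R.
Proof.
apply: contraNneq Sneg1; rewrite -addn1 natrD => /eqP; rewrite addr_eq0 => /eqP <-.
exact: rpred_nat.
Qed.

Lemma oppr_natrS_notin n : - n.+1%:R \notin S.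
Proof.
apply: contraNN Sneg1 => Sn; rewrite (_ : -1 = - n.+1%:R + n%:R); last first.
  by rewrite -addn1 natrD opprD addrAC addNr add0r.
by rewrite rpredD ?rpred_nat.
Qed.

Local Notation lin := ('X + 2%:P : {poly R}).
Local Notation pA := ('X^4 + 4%:P * 'X^2 + 16%:P : {poly R}).
Local Notation pB := ('X^2 + 2%:P * 'X + 4%:P : {poly R}).
Local Notation pC := ('X^3 + 8%:P : {poly R}).
Local Notation pQ := ('X^2 - 2%:P * 'X + 4%:P : {poly R}).

Lemma size_pA : size pA = 5%N.
Proof.
have sz4X2 : (size (4%:P * 'X^2 : {poly R})%R < 5)%N.
  by rewrite mul_polyC (leq_ltn_trans (size_scale_leq _ _)) ?size_polyXn.
rewrite size_addl size_addl ?size_polyXn //.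
by rewrite size_polyC (leq_ltn_trans (leq_b1 _)) // size_addl ?size_polyXn.
Qed.

Lemma recip_lin : recip lin = 2%:P * 'X + 1.
Proof.
apply/polyP => i; rewrite coef_recip size_XaddC !coefE.
by case: i => [|[|i]] /=; ring.
Qed.

Lemma recip_pA : recip pA = 16%:P * 'X^4 + 4%:P * 'X^2 + 1.
Proof.
apply/polyP => i; rewrite coef_recip size_pA !coefE.
by case: i => [|[|[|[|[|i]]]]] /=; ring.
Qed.

Lemma not_dvdIn_lin y : y.[-2] != 0 -> ~ dvdIn T lin y.
Proof.
move=> y2 dvd_lin_y; have : root lin (-2) by rewrite rootE hornerD hornerX hornerC addNr.
by move/(dvdIn_root dvd_lin_y); rewrite rootE (negbTE y2).
Qed.

Lemma not_dvdIn_lin_pC : ~ dvdIn T lin pC.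
Proof.
have -> : pC = lin * pQ by ring.
move=> [r Tr /mulfI eqQr]; move: Tr; rewrite -eqQr ?monic_neq0 ?monicXaddC //.
rewrite in_polysemi => /polyOverP/(_ 1%N).
by rewrite !coefE /= (_ : _ + _ = - 2%:R); [rewrite (negbTE (oppr_natrS_notin 1)) | ring].
Qed.

Lemma lin_pABC_in : [/\ lin \in T, pA \in T, pB \in T & pC \in T].
Proof.
by split; rewrite in_polysemi; apply/polyOverP => i; rewrite !coefE;
  case: ifP => _; rewrite ?rpredD ?rpredM ?rpred_nat ?rpred0 ?rpred1.
Qed.

Lemma coef0_lin_pABC : [/\ lin`_0 != 0, pA`_0 != 0, pB`_0 != 0 & pC`_0 != 0].
Proof. by split; rewrite !coefE /= ?mulr0 ?addr0 ?add0r natrS_neq0. Qed.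

Lemma horner_neg2 : [/\ pB.[-2] = 4, (recip lin).[-2] = -3 & (recip pA).[-2] = 273].
Proof.
rewrite recip_lin recip_pA.
by split; rewrite !(hornerD, hornerCM, hornerXn, hornerX, hornerC); ring.
Qed.

Lemma not_dvdIn_lin_factors fA fB fC :
    factorizationOf T pA fA -> factorizationOf T pB fB -> factorizationOf T pC fC ->
  forall b, b \in fB ++ fC ++ recip lin :: map recip fA -> ~ dvdIn T lin b.
Proof.
have mulT := polysemi_mulr_closed semiS.
have [_ A00 _ _] := coef0_lin_pABC; have [B2 rlin2 rA2] := horner_neg2.
move=> factA factB factC b; rewrite !mem_cat inE => /or4P[bB|bC|/eqP->|bA].
- apply: (factorization_notdvdIn mulT factB _ bB).
  by apply: not_dvdIn_lin; rewrite B2 natrS_neq0.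
- exact: (factorization_notdvdIn mulT factC not_dvdIn_lin_pC bC).
- by apply: not_dvdIn_lin; rewrite rlin2 oppr_eq0 natrS_neq0.
- apply: (factorization_notdvdIn mulT (recip_factorization semiS factA A00) _ bA).
  by apply: not_dvdIn_lin; rewrite rA2 natrS_neq0.
Qed.

Lemma polysemi_not_LFS : ~ LFS T.
Proof.
have mulT := polysemi_mulr_closed semiS.
have [Tlin TA TB TC] := lin_pABC_in; have [lin00 A00 B00 C00] := coef0_lin_pABC.
have nz (p : {poly R}) : p`_0 != 0 -> p != 0 by apply: contraNneq => ->; rewrite coef0.
case=> atomicT lengthT.
have [fA factA] := atomic_factorization mulT atomicT TA (nz _ A00).
have [fB factB] := atomic_factorization mulT atomicT TB (nz _ B00).
have [fC factC] := atomic_factorization mulT atomicT TC (nz _ C00).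
have atom_lin := monic_atomIn semiS Tlin (monicXaddC _) (size_XaddC _).
have atom_recip_lin := recip_atomIn semiS atom_lin lin00.
pose W := lin * (pA * (recip pB * recip pC)).
have factW1 : factorizationOf T W (lin :: fA ++ map recip fB ++ map recip fC).
  apply: (factorization_cat mulT (factorization_atom mulT atom_lin)).
  apply: (factorization_cat mulT factA).
  exact: (factorization_cat mulT (recip_factorization semiS factB B00)
                               (recip_factorization semiS factC C00)).
have factW2 : factorizationOf T W (fB ++ fC ++ recip lin :: map recip fA).
  have -> : W = pB * (pC * (recip lin * recip pA)).
    have recip_lin_pA : recip lin * recip pA = recip pB * recip pC.
      by rewrite -!recipM; congr recip; ring.
    by rewrite recip_lin_pA /W; ring.
  apply: (factorization_cat mulT factB); apply: (factorization_cat mulT factC).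
  exact: (factorization_cat mulT (factorization_atom mulT atom_recip_lin)
                                 (recip_factorization semiS factA A00)).
apply: (lengthT W _ _ _ _ factW1 factW2).
- by rewrite /W; do !apply: mulT.2; rewrite ?recip_polysemi.
- by rewrite /W !mulf_neq0 ?recip_eq0 ?nz.
- apply: (same_factorization_notdvdIn (mem_head _ _)).
  exact: not_dvdIn_lin_factors factA factB factC.
- by rewrite /= !size_cat /= !size_map; lia.
Qed.

End NegOneNotIn.

Theorem corollary5p3 (R : idomainType) (S : {pred R}) :
  semidomain S -> LFS (polysemi S) -> forall s, s \in S -> - s \in S.
Proof.
move=> semiS lfsS s Ss; have [Sneg1|Sneg1] := boolP (-1 \in S).
  by rewrite -mulN1r; case: semiS => _ _ _ SM; apply: SM.
by case: (polysemi_not_LFS semiS Sneg1 lfsS).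
Qed.
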